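(* Let $\mathcal{P}$ be a process LTS and $\mathcal{E}$ an environment LTS. For all image-finite environments $e$ and all image-finite processes $p,q$: (1) $p\le^{ji}_e q \iff p\le_e q \iff \mathcal{L}(p)\cap\mathcal{L}(e)\subseteq\mathcal{L}(q)\cap\mathcal{L}(e)$; (2) $p\simeq^{ji}_e q \iff p\simeq_e q \iff \mathcal{L}(p)\cap\mathcal{L}(e)=\mathcal{L}(q)\cap\mathcal{L}(e)$. The implications from left to right (from $p\le_e q$, resp. $p\simeq_e q$, to the formula conditions) hold also for $p,q,e$ that are not image-finite.
   Context: A labeled transition system (LTS) is a triple $\langle \mathrm{St},A,\to\rangle$ with states, actions, and transitions $s\xrightarrow{a}t$. A process LTS $\mathcal{P}=\langle \mathrm{Pr},A,\to\rangle$ has states called processes; an environment LTS $\mathcal{E}=\langle\mathrm{Env},A,\Rightarrow\rangle$ has states called environments, transitions $e\xRightarrow{a}e'$. A state is image-finite if every state reachable from it has, for each action $a$, only finitely many $a$-successors. A simulation is a nonempty relation $S$ on states such that $s\,S\,t$ and $s\xrightarrow{a}s'$ imply some $t\xrightarrow{a}t'$ with $s'\,S\,t'$; $s\le t$ iff some simulation relates $s$ to $t$. An $\mathcal{E}$-parameterized simulation on $\mathcal{P}$ is a family $(S_f)_{f\in\mathrm{Env}}$ of nonempty relations on $\mathrm{Pr}$ such that whenever $p\,S_e\,q$, $e\xRightarrow{a}e'$ and $p\xrightarrow{a}p'$, there is $q'$ with $q\xrightarrow{a}q'$ and $p'\,S_{e'}\,q'$. $p\le_e q$ iff some such family has $p\,S_e\,q$;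 $p\simeq_e q$ iff $p\le_e q$ and $q\le_e p$. The join LTS $\mathcal{P}\mathbin{\&}\mathcal{E}$ has states $p\mathbin{\&}e$ and transitions $p\mathbin{\&}e\xrightarrow{a}p'\mathbin{\&}e'$ iff $p\xrightarrow{a}p'$ and $e\xRightarrow{a}e'$. $p\le^{ji}_e q$ iff $p\mathbin{\&}e\le q\mathbin{\&}e$; $p\simeq^{ji}_e q$ iff $p\le^{ji}_e q$ and $q\le^{ji}_e p$. Positive formulas $\mathcal{L}$ over $A$: $\phi::=\top\mid\phi\wedge\phi\mid\langle a\rangle\phi$. Satisfaction: $s\models\top$ always; $s\models\phi_1\wedge\phi_2$ iff both; $s\models\langle a\rangle\phi$ iff some $s\xrightarrow{a}s'$ with $s'\models\phi$ (in the LTS containing $s$). $\mathcal{L}(s)=\{\phi\in\mathcal{L}: s\models\phi\}$. *)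

From Stdlib Require Import List.

Set Implicit Arguments.

Definition lts (S A : Type) := S -> A -> S -> Prop.

Section LTSDefs.
Variables (S A : Type) (step : lts S A).

Inductive reachable : S -> S -> Prop :=
| reach_refl : forall s, reachable s s
| reach_step : forall s a s' t, step s a s' -> reachable s' t -> reachable s t.

Definition image_finite (s : S) : Prop :=
  forall t, reachable s t ->
    forall a : A, exists l : list S, forall t', step t a t' -> In t' l.

Definition simulation (R : S -> S -> Prop) : Prop :=
  (exists s t, R s t) /\
  forall s t a s', R s t -> step s a s' -> exists t', step t a t' /\ R s' t'.

Definition sim_le (s t : S) : Prop :=
  exists R, simulation R /\ R s t.

Inductive form : Type :=
| FTop : form
| FAnd : form -> form -> form
| FDia : A -> form -> form.

Fixpoint sat (s : S) (phi : form) : Prop :=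
  match phi with
  | FTop => True
  | FAnd phi1 phi2 => sat s phi1 /\ sat s phi2
  | FDia a phi' => exists s', step s a s' /\ sat s' phi'
  end.

End LTSDefs.

Arguments FTop {A}.

Section ParamSim.
Variables (Pr Env A : Type) (pstep : lts Pr A) (estep : lts Env A).

Definition param_simulation (Sf : Env -> Pr -> Pr -> Prop) : Prop :=
  (forall f : Env, exists p q, Sf f p q) /\
  forall e e' p q a p', Sf e p q -> estep e a e' -> pstep p a p' ->
    exists q', pstep q a q' /\ Sf e' p' q'.

Definition param_le (e : Env) (p q : Pr) : Prop :=
  exists Sf, param_simulation Sf /\ Sf e p q.

Definition param_eq (e : Env) (p q : Pr) : Prop :=
  param_le e p q /\ param_le e q p.

Definition join_step : lts (Pr * Env) A :=
  fun pe a pe' => pstep (fst pe) a (fst pe') /\ estep (snd pe) a (snd pe').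

Definition ji_le (e : Env) (p q : Pr) : Prop :=
  sim_le join_step (p, e) (q, e).

Definition ji_eq (e : Env) (p q : Pr) : Prop :=
  ji_le e p q /\ ji_le e q p.

(* L(p) ∩ L(e) ⊆ L(q) ∩ L(e) *)
Definition form_incl (e : Env) (p q : Pr) : Prop :=
  forall phi : form A,
    (sat pstep p phi /\ sat estep e phi) -> (sat pstep q phi /\ sat estep e phi).

Definition form_eqv (e : Env) (p q : Pr) : Prop :=
  forall phi : form A,
    (sat pstep p phi /\ sat estep e phi) <-> (sat pstep q phi /\ sat estep e phi).

End ParamSim.

From Stdlib Require Import List Classical.

Set Implicit Arguments.

(* The join LTS satisfies exactly the formulas common to its two components, so
   simulation of joins and parameterized simulation both preserve [L(p) ∩ L(e)].
   Conversely, inclusion of [L(p) ∩ L(e)] in [L(q) ∩ L(e)] is itself a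
   parameterized simulation when [q] is image-finite: if no [a]-successor of [q]
   matched a given move of [p] and [e], the finitely many successors could be
   separated by one conjunction [psi], and [<a> psi] would lie in
   [L(p) ∩ L(e)] but not in [L(q)]. *)

Lemma image_finite_step (S A : Type) (step : lts S A) (s s' : S) (a : A) :
  image_finite step s -> step s a s' -> image_finite step s'.
Proof.
  intros Hs Hstep t Hreach. apply Hs. eapply reach_step; eauto.
Qed.

Lemma simulation_sat (S A : Type) (step : lts S A) (R : S -> S -> Prop) :
  simulation step R ->
  forall phi s t, R s t -> sat step s phi -> sat step t phi.
Proof.
  intros [_ HR] phi.
  induction phi as [|phi1 IH1 phi2 IH2|a phi IH]; intros s t Hst; simpl.
  - trivial.
  - intros [H1 H2]. split; eauto.
  - intros [s' [Hs Hs']].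
    destruct (HR _ _ _ _ Hst Hs) as [t' [Ht Ht']].
    exists t'. eauto.
Qed.

Section ParamSimulation.
Variables (Pr Env A : Type) (pstep : lts Pr A) (estep : lts Env A).

Lemma sat_join_step (phi : form A) (p : Pr) (e : Env) :
  sat (join_step pstep estep) (p, e) phi <-> sat pstep p phi /\ sat estep e phi.
Proof.
  revert p e.
  induction phi as [|phi1 IH1 phi2 IH2|a phi IH]; intros p e; simpl.
  - tauto.
  - rewrite IH1, IH2. tauto.
  - split.
    + intros [[p' e'] [[Hp He] Hsat]]. apply IH in Hsat. simpl in *.
      split; [exists p' | exists e']; tauto.
    + intros [[p' [Hp Hp']] [e' [He He']]].
      exists (p', e'). split; [split|apply IH]; auto.
Qed.

Lemma param_le_ji_le (e : Env) (p q : Pr) :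
  param_le pstep estep e p q -> ji_le pstep estep e p q.
Proof.
  intros [Sf [[_ HS] Hpq]].
  exists (fun x y => snd x = snd y /\ Sf (snd x) (fst x) (fst y)).
  split; [split|simpl; auto].
  - exists (p, e), (q, e). simpl. auto.
  - intros [p1 f] [q1 g] a [p' f'] [Hfg Hp1q1] [Hp He]. simpl in *. subst g.
    destruct (HS _ _ _ _ _ _ Hp1q1 He Hp) as [q' [Hq Hp'q']].
    exists (q', f'). split; [split|]; simpl; auto.
Qed.

Lemma ji_le_form_incl (e : Env) (p q : Pr) :
  ji_le pstep estep e p q -> form_incl pstep estep e p q.
Proof.
  intros [R [HR Hpq]] phi Hphi.
  pose proof (simulation_sat HR phi _ _ Hpq) as Hsat.
  rewrite !sat_join_step in Hsat. tauto.
Qed.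

Lemma param_le_form_incl (e : Env) (p q : Pr) :
  param_le pstep estep e p q -> form_incl pstep estep e p q.
Proof.
  intros H. apply ji_le_form_incl, param_le_ji_le, H.
Qed.

Lemma distinguishing_conjunction (p : Pr) (e : Env) (Q : Pr -> Prop) (l : list Pr) :
  (forall q, Q q -> exists phi, sat pstep p phi /\ sat estep e phi /\ ~ sat pstep q phi) ->
  exists psi, sat pstep p psi /\ sat estep e psi /\
    forall q, In q l -> Q q -> ~ sat pstep q psi.
Proof.
  intros Hdist. induction l as [|z l IH].
  - exists FTop. simpl. tauto.
  - destruct IH as [psi [Hp [He Hl]]].
    destruct (classic (Q z)) as [Hz|Hz].
    + destruct (Hdist z Hz) as [phi [Hp' [He' Hz']]].
      exists (FAnd phi psi). simpl.
      split; [tauto|split; [tauto|]].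
      intros q [<-|Hin] Hq [Hphi Hpsi]; [tauto|exact (Hl q Hin Hq Hpsi)].
    + exists psi. split; [tauto|split; [tauto|]].
      intros q [<-|Hin] Hq; [tauto|auto].
Qed.

Lemma form_incl_step (e e' : Env) (p p' q : Pr) (a : A) :
  image_finite pstep q -> form_incl pstep estep e p q ->
  estep e a e' -> pstep p a p' ->
  exists q', pstep q a q' /\ form_incl pstep estep e' p' q'.
Proof.
  intros Hfin Hincl He Hp.
  apply NNPP. intros Hnone.
  destruct (Hfin q (reach_refl _ _) a) as [l Hl].
  destruct (distinguishing_conjunction p' e' (pstep q a) l) as [psi [Hp' [He' Hsep]]].
  { intros q' Hq'. apply NNPP. intros Hno_phi. apply Hnone.
    exists q'. split; [exact Hq'|].
    intros phi [Hphi_p Hphi_e]. split; [|exact Hphi_e].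
    apply NNPP. intros Hphi_q. apply Hno_phi. eauto. }
  destruct (Hincl (FDia a psi)) as [[q' [Hq Hq']] _].
  - simpl. split; eauto.
  - exact (Hsep q' (Hl q' Hq) Hq Hq').
Qed.

Lemma form_incl_param_le (e : Env) (p q : Pr) :
  image_finite pstep q -> form_incl pstep estep e p q -> param_le pstep estep e p q.
Proof.
  intros Hfin Hincl.
  (* The diagonal keeps the relation nonempty at every environment. *)
  exists (fun f p q => p = q \/ (image_finite pstep q /\ form_incl pstep estep f p q)).
  split; [split|right; auto].
  - intros f. exists p, p. auto.
  - intros f f' p1 q1 a p' [<-|[Hfin1 Hincl1]] Hf Hp.
    + exists p'. auto.
    + destruct (form_incl_step Hfin1 Hincl1 Hf Hp) as [q' [Hq Hincl']].
      exists q'. split; [exact Hq|].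
      right. split; [eapply image_finite_step|]; eauto.
Qed.

Lemma param_le_iff_form_incl (e : Env) (p q : Pr) :
  image_finite pstep q ->
  param_le pstep estep e p q <-> form_incl pstep estep e p q.
Proof.
  intros Hfin. split; [apply param_le_form_incl|apply form_incl_param_le; exact Hfin].
Qed.

Lemma ji_le_iff_param_le (e : Env) (p q : Pr) :
  image_finite pstep q ->
  ji_le pstep estep e p q <-> param_le pstep estep e p q.
Proof.
  intros Hfin. split; [|apply param_le_ji_le].
  intros H. apply form_incl_param_le, ji_le_form_incl, H. exact Hfin.
Qed.

Lemma form_eqv_iff_form_incl (e : Env) (p q : Pr) :
  form_eqv pstep estep e p q <->
  form_incl pstep estep e p q /\ form_incl pstep estep e q p.
Proof.
  unfold form_eqv, form_incl. split.
  - intros H. split; intros phi; apply H.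
  - intros [H1 H2] phi. split; auto.
Qed.

End ParamSimulation.

Theorem theorem4p2 :
  forall (Pr Env A : Type) (pstep : lts Pr A) (estep : lts Env A),
    (* (1) for image-finite e, p, q *)
    (forall (e : Env) (p q : Pr),
        image_finite estep e -> image_finite pstep p -> image_finite pstep q ->
        (ji_le pstep estep e p q <-> param_le pstep estep e p q) /\
        (param_le pstep estep e p q <-> form_incl pstep estep e p q)) /\
    (* (2) for image-finite e, p, q *)
    (forall (e : Env) (p q : Pr),
        image_finite estep e -> image_finite pstep p -> image_finite pstep q ->
        (ji_eq pstep estep e p q <-> param_eq pstep estep e p q) /\
        (param_eq pstep estep e p q <-> form_eqv pstep estep e p q)) /\
    (* left-to-right implications without image-finiteness *)
    (forall (e : Env) (p q : Pr),
        param_le pstep estep e p q -> form_incl pstep estep e p q) /\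
    (forall (e : Env) (p q : Pr),
        param_eq pstep estep e p q -> form_eqv pstep estep e p q).
Proof.
  intros Pr Env A pstep estep.
  split; [|split; [|split]]; intros e p q.
  - intros _ _ Hq. split.
    + apply ji_le_iff_param_le, Hq.
    + apply param_le_iff_form_incl, Hq.
  - intros _ Hp Hq. unfold ji_eq, param_eq.
    rewrite form_eqv_iff_form_incl,
      (ji_le_iff_param_le _ _ _ Hp), (ji_le_iff_param_le _ _ _ Hq),
      (param_le_iff_form_incl _ _ _ Hp), (param_le_iff_form_incl _ _ _ Hq).
    tauto.
  - apply param_le_form_incl.
  - intros [Hpq Hqp]. apply form_eqv_iff_form_incl.
    split; apply param_le_form_incl; assumption.
Qed.
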